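(* For every integer $k\ge 3$, $$F_v(J_k,J_k;k)\le\left\lceil\frac{5F_v(k-1,k-1;k)}{2}\right\rceil.$$
   Context: All graphs are finite and simple. $J_n$ denotes $K_n$ with one edge removed. An integer $a$ used in place of a graph denotes $K_a$. ''A graph $F$ contains $H$'' means $F$ has a (not necessarily induced) subgraph isomorphic to $H$. $G\rightarrow(H_1,H_2)^v$ means: for every partition $V(G)=X_1\cup X_2$ there is $i$ such that the subgraph induced by $X_i$ contains $H_i$. $F_v(H_1,H_2;k)$ is the minimum number of vertices of a $K_k$-free graph $G$ with $G\rightarrow(H_1,H_2)^v$. *)

From Stdlib Require Import ClassicalEpsilon.
From mathcomp Require Import all_boot.
Set Implicit Arguments. Unset Strict Implicit. Unset Printing Implicit Defensive.

Definition is_graph n (e : rel 'I_n) : Prop := symmetric e /\ irreflexive e.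

Definition Krel (a : nat) : rel 'I_a := fun i j => i != j.

Arguments Krel a : clear implicits.
Definition Jrel (a : nat) : rel 'I_a :=
  fun i j => (i != j) &&
    ~~ (((val i == 0) && (val j == 1)) || ((val i == 1) && (val j == 0))).

Arguments Jrel a : clear implicits.
Definition contains_in m (h : rel 'I_m) n (g : rel 'I_n) (X : {set 'I_n}) : Prop :=
  exists f : 'I_m -> 'I_n,
    injective f /\ (forall i, f i \in X) /\ (forall i j, h i j -> g (f i) (f j)).

Definition Kfree (k : nat) n (g : rel 'I_n) : Prop :=
  ~ contains_in (Krel k) g [set: 'I_n].

Definition varrows n (g : rel 'I_n) m1 (h1 : rel 'I_m1) m2 (h2 : rel 'I_m2) : Prop :=
  forall X : {set 'I_n}, contains_in h1 g X \/ contains_in h2 g (~: X).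

Definition Fv_good (k : nat) m1 (h1 : rel 'I_m1) m2 (h2 : rel 'I_m2) (n : nat) : Prop :=
  exists g : rel 'I_n, is_graph g /\ Kfree k g /\ varrows g h1 h2.

Definition Fv_goodb k m1 (h1 : rel 'I_m1) m2 (h2 : rel 'I_m2) : pred nat :=
  fun n => if excluded_middle_informative (Fv_good k h1 h2 n) then true else false.

(* F_v(H1,H2;k): the minimum such n (convention: 0 if no such graph exists). *)
Definition Fv (k : nat) m1 (h1 : rel 'I_m1) m2 (h2 : rel 'I_m2) : nat :=
  match excluded_middle_informative (exists n, Fv_goodb k h1 h2 n) with
  | left ex => ex_minn ex
  | right _ => 0
  end.

From mathcomp Require Import all_boot zify fingroup perm.
From Stdlib Require Import Classical ClassicalEpsilon.

Set Implicit Arguments. Unset Strict Implicit. Unset Printing Implicit Defensive.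

(* Take a K_k-free graph G on n vertices with G -> (K_(k-1), K_(k-1))^v and n
   minimal, and a vertex v.  By minimality G - v has a partition Z with no
   K_(k-1) on either side.  Blow G up by doubling every vertex and tripling v,
   copies of a vertex being non-adjacent: the result has 2n + 1 <= ceil(5n/2)
   vertices and is still K_k-free.  Given a partition X of the blow-up, put a
   vertex of G on the side holding the majority of its copies, ties broken by
   Z.  A monochromatic K_(k-1) of G cannot consist of tied vertices only (they
   avoid v and follow Z), so one of its vertices has two copies on its side and
   every other vertex at least one: together they span a J_k. *)

Lemma contains_in_subset m (h : rel 'I_m) n (g : rel 'I_n) (A B : {set 'I_n}) :
  A \subset B -> contains_in h g A -> contains_in h g B.
Proof.
move=> /subsetP sAB [f [f_inj [fA f_hom]]].
by exists f; split; [|split] => // i; apply: sAB.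
Qed.

Lemma contains_in_leq m (h : rel 'I_m) n (g : rel 'I_n) (A : {set 'I_n}) :
  contains_in h g A -> m <= n.
Proof. by case=> f [f_inj _]; have := leq_card f f_inj; rewrite !card_ord. Qed.

Lemma clique_inj a n (g : rel 'I_n) (f : 'I_a -> 'I_n) :
  irreflexive g -> (forall i j, i != j -> g (f i) (f j)) -> injective f.
Proof.
by move=> g_irr f_cl i j fij; apply/eqP/negPn/negP => /f_cl; rewrite fij g_irr.
Qed.

Lemma Jrel_lift0 k (i j : 'I_k) : Jrel k.+1 (lift ord0 i) (lift ord0 j) = Krel k i j.
Proof.
rewrite /Jrel /Krel (inj_eq (@lift_inj _ ord0)) /= /bump !add1n.
by rewrite -[j.+1 == 0]/false andbF andbT.
Qed.

Lemma contains_Jrel_Krel k n (g : rel 'I_n) (A : {set 'I_n}) :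
  contains_in (Jrel k.+1) g A -> contains_in (Krel k) g A.
Proof.
case=> f [f_inj [fA f_hom]]; exists (f \o lift ord0); split; last split.
- exact/inj_comp/lift_inj.
- by move=> i; apply: fA.
- by move=> i j ij; apply: f_hom; rewrite Jrel_lift0.
Qed.

Lemma imset_section (aT rT : finType) (I : finType) (p : aT -> rT) (T : {set aT})
    (f : I -> rT) :
  (forall i, f i \in p @: T) ->
  exists2 s : I -> aT, forall i, s i \in T & forall i, p (s i) = f i.
Proof.
move=> fT; apply: fin_all_exists2 (fun i x => x \in T) (fun i x => p x = f i) _ => i.
by case/imsetP: (fT i) => x xT ->; exists x.
Qed.

Section Pullback.

Variables (m n : nat) (p : 'I_m -> 'I_n) (g : rel 'I_n).

Local Notation fiber u := (p @^-1: [set u]).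

Lemma is_graph_relpre : is_graph g -> is_graph (relpre p g).
Proof. by case=> g_sym g_irr; split=> [x y | x] /=; [apply: g_sym | apply: g_irr]. Qed.

Lemma Kfree_relpre k : irreflexive g -> Kfree k g -> Kfree k (relpre p g).
Proof.
move=> g_irr g_free [f [_ [_ f_cl]]]; apply: g_free; exists (p \o f).
by split; [exact: clique_inj g_irr f_cl | split=> // i; rewrite inE].
Qed.

Lemma contains_in_relpre a (h : rel 'I_a) (S : {set 'I_m}) :
  contains_in h g (p @: S) -> contains_in h (relpre p g) S.
Proof.
case=> f [f_inj [/imset_section [s sS psE] f_hom]].
exists s; split; last split=> //.
- by move=> i j sij; apply: f_inj; rewrite -psE sij psE.
- by move=> i j hij /=; rewrite !psE; apply: f_hom.
Qed.

Lemma contains_Jrel_relpre k (T : {set 'I_m}) (f : 'I_k.+1 -> 'I_n) (x0 x1 : 'I_m) :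
  irreflexive g -> (forall i j, i != j -> g (f i) (f j)) ->
  (forall i, f i \in p @: T) -> x0 != x1 -> x0 \in T -> x1 \in T ->
  p x0 = f ord0 -> p x1 = f ord0 -> contains_in (Jrel k.+2) (relpre p g) T.
Proof.
move=> g_irr f_cl /imset_section [s sT psE] x01 x0T x1T px0 px1.
(* [c] collapses the non-adjacent pair 0, 1 of J_(k+2) onto vertex 0 of K_(k+1). *)
pose c (j : 'I_k.+2) : 'I_k.+1 := inord j.-1.
have cE j : nat_of_ord (c j) = j.-1 by rewrite /c inordK //; have := ltn_ord j; lia.
pose F (j : 'I_k.+2) :=
  if j == 0 :> nat then x0 else if j == 1 :> nat then x1 else s (c j).
have pF j : p (F j) = f (c j).
  rewrite /F; case: ifP => [/eqP j0 | _]; last case: ifP => [/eqP j1 | _] //.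
  - by rewrite px0; congr f; apply: ord_inj; rewrite cE j0.
  - by rewrite px1; congr f; apply: ord_inj; rewrite cE j1.
have c_Jrel a b : Jrel k.+2 a b -> c a != c b.
  by rewrite /Jrel -!val_eqE /= !cE; lia.
exists F; split; last split.
- move=> a b Fab; apply/eqP/negPn/negP => ab.
  case Jab: (Jrel k.+2 a b).
    by have := f_cl _ _ (c_Jrel _ _ Jab); rewrite -!pF Fab g_irr.
  move: Jab; rewrite /Jrel ab /= => /negbFE /orP [] /andP [/eqP a0 /eqP b1];
    by move: Fab x01; rewrite /F a0 b1 /= => ->; rewrite eqxx.
- by move=> j; rewrite /F; case: ifP => // _; case: ifP.
- by move=> a b /c_Jrel /f_cl; rewrite /= !pF.
Qed.

Definition vote (X : {set 'I_m}) (Z : {set 'I_n}) : {set 'I_n} :=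
  [set u | (#|fiber u :\: X| < #|fiber u :&: X|)
           || (#|fiber u :\: X| == #|fiber u :&: X|) && (u \in Z)].

Lemma setC_vote X Z : ~: vote X Z = vote (~: X) (~: Z).
Proof.
apply/setP => u; rewrite !inE !setDE setCK.
by case: ltngtP; rewrite ?andbF ?andbT ?orbF.
Qed.

Definition even_fibers : {set 'I_n} := [set u | ~~ odd #|fiber u|].

Hypothesis g_irr : irreflexive g.
Hypothesis fibers_gt1 : forall u, 1 < #|fiber u|.

Lemma vote_contains_Jrel k X Z :
  ~ contains_in (Krel k.+1) g (Z :&: even_fibers) ->
  contains_in (Krel k.+1) g (vote X Z) -> contains_in (Jrel k.+2) (relpre p g) X.
Proof.
move=> Z_free [f [f_inj [f_vote f_cl]]].
have cardX u : #|fiber u :&: X| + #|fiber u :\: X| > 1.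
  by rewrite cardsID; apply: fibers_gt1.
have vote_imset u : u \in vote X Z -> u \in p @: X.
  rewrite inE; move: (cardX u).
  set a := #|fiber u :&: X|; set b := #|fiber u :\: X| => u_gt1 u_vote.
  have /card_gt0P [x] : 0 < a by lia.
  by rewrite !inE => /andP [/eqP <- xX]; apply: imset_f.
have [/existsP [i0 i0_wins] | /existsPn ties] :=
  boolP [exists i, #|fiber (f i) :\: X| < #|fiber (f i) :&: X|]; last first.
  case: Z_free; exists f; split=> //; split=> // i; have := f_vote i.
  rewrite !inE (negbTE (ties i)) /= => /andP [/eqP ba ->].
  by rewrite -(cardsID X) ba addnn odd_double.
have /card_gt1P [x0 [x1 [x0X x1X x01]]] : 1 < #|fiber (f i0) :&: X|.
  by have := cardX (f i0); lia.
move: x0X x1X; rewrite !inE => /andP [/eqP px0 x0X] /andP [/eqP px1 x1X].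
apply: (@contains_Jrel_relpre k X (f \o tperm ord0 i0) x0 x1) => //=.
- by move=> i j ij; apply: f_cl; rewrite /Krel (inj_eq perm_inj).
- by move=> i; apply/vote_imset/f_vote.
- by rewrite tpermL.
- by rewrite tpermL.
Qed.

Lemma varrows_relpre k Z :
  varrows g (Krel k.+1) (Krel k.+1) ->
  ~ contains_in (Krel k.+1) g (Z :&: even_fibers) ->
  ~ contains_in (Krel k.+1) g (~: Z :&: even_fibers) ->
  varrows (relpre p g) (Jrel k.+2) (Jrel k.+2).
Proof.
move=> g_arrows Z_free CZ_free X; case: (g_arrows (vote X Z)) => [H | H].
  by left; apply: vote_contains_Jrel H.
by right; rewrite setC_vote in H; apply: vote_contains_Jrel H.
Qed.

End Pullback.

Definition twin_base n (v0 : 'I_n) (x : option ('I_n * bool)) : 'I_n :=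
  if x is Some (u, _) then u else v0.

Definition twin_proj n (v0 : 'I_n) (i : 'I_#|{: option ('I_n * bool)}|) : 'I_n :=
  twin_base v0 (enum_val i).

Lemma card_twin_fiber n (v0 u : 'I_n) :
  #|twin_proj v0 @^-1: [set u]| = (u == v0) + 2.
Proof.
have -> : twin_proj v0 @^-1: [set u] =
          enum_val @^-1: (twin_base v0 @^-1: [set u]) by apply/setP => i; rewrite !inE.
rewrite on_card_preimset; last exact/onW_bij/enum_val_bij.
case: eqVneq => [-> | u_v0].
  have -> : twin_base v0 @^-1: [set v0] =
            None |: [set Some (v0, false); Some (v0, true)].
    apply/setP => -[[w []] |];
      by rewrite !inE //= ?(inj_eq Some_inj) ?xpair_eqE ?eqxx //; case: eqP.
  by rewrite cardsU1 cards2 !inE (inj_eq Some_inj) xpair_eqE eqxx.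
have -> : twin_base v0 @^-1: [set u] = [set Some (u, false); Some (u, true)].
  apply/setP => -[[w []] |]; last by rewrite !inE eq_sym (negbTE u_v0).
  1,2: by rewrite !inE !(inj_eq Some_inj) !xpair_eqE; case: eqP.
by rewrite cards2 (inj_eq Some_inj) xpair_eqE eqxx.
Qed.

Lemma Fv_good_twin k n (g : rel 'I_n) (v0 : 'I_n) (Z : {set 'I_n}) :
  is_graph g -> Kfree k.+2 g -> varrows g (Krel k.+1) (Krel k.+1) ->
  ~ contains_in (Krel k.+1) g (Z :\ v0) ->
  ~ contains_in (Krel k.+1) g (~: Z :\ v0) ->
  Fv_good k.+2 (Jrel k.+2) (Jrel k.+2) (n * 2).+1.
Proof.
move=> g_graph g_free g_arrows Z_free CZ_free.
have -> : (n * 2).+1 = #|{: option ('I_n * bool)}|.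
  by rewrite card_option card_prod card_ord card_bool.
have even_fibers_v0 (A : {set 'I_n}) :
    A :&: even_fibers (twin_proj v0) \subset A :\ v0.
  by apply/subsetP => u; rewrite !inE card_twin_fiber andbC; case: eqP.
exists (relpre (twin_proj v0) g); split; first exact: is_graph_relpre.
split; first exact: Kfree_relpre (proj2 g_graph) g_free.
apply: (@varrows_relpre _ _ (twin_proj v0) g (proj2 g_graph) _ k Z g_arrows)
  => [u | A_free | A_free].
- by rewrite card_twin_fiber addn2.
- exact: Z_free (contains_in_subset (even_fibers_v0 Z) A_free).
- exact: CZ_free (contains_in_subset (even_fibers_v0 (~: Z)) A_free).
Qed.

Lemma critical_partition k N m1 (h1 : rel 'I_m1) m2 (h2 : rel 'I_m2)
    (g : rel 'I_N.+1) :
  is_graph g -> Kfree k g -> ~ Fv_good k h1 h2 N ->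
  exists Z : {set 'I_N.+1},
    ~ contains_in h1 g (Z :\ ord_max) /\ ~ contains_in h2 g (~: Z :\ ord_max).
Proof.
move=> g_graph g_free not_good; pose g' := relpre (lift ord_max) g.
have [X [X_free CX_free]] :
    exists X, ~ contains_in h1 g' X /\ ~ contains_in h2 g' (~: X).
  apply: NNPP => no_partition; apply: not_good; exists g'.
  split; first exact: is_graph_relpre.
  split; first exact: Kfree_relpre (proj2 g_graph) g_free.
  by move=> X; apply: NNPP => /not_or_and X_free; apply: no_partition; exists X.
exists (lift ord_max @: X); split=> [/(contains_in_subset (subsetDl _ _)) | H].
  by move/contains_in_relpre.
apply/CX_free/contains_in_relpre/(contains_in_subset _ H).
apply/subsetP => u; rewrite !inE eq_sym => /andP [/unlift_some [w -> _] wX].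
by apply: imset_f; rewrite inE; apply: contra wX => /imset_f.
Qed.

Section MinimalOrder.

Variables (k m1 m2 : nat) (h1 : rel 'I_m1) (h2 : rel 'I_m2).

Lemma Fv_goodbP n : reflect (Fv_good k h1 h2 n) (Fv_goodb k h1 h2 n).
Proof. by rewrite /Fv_goodb; case: excluded_middle_informative; constructor. Qed.

Lemma Fv_leq n : Fv_good k h1 h2 n -> Fv k h1 h2 <= n.
Proof.
move=> /Fv_goodbP good; rewrite /Fv; case: excluded_middle_informative => // ex.
by case: ex_minnP => m _; apply.
Qed.

Lemma Fv_good_Fv : (exists n, Fv_good k h1 h2 n) -> Fv_good k h1 h2 (Fv k h1 h2).
Proof.
case=> n /Fv_goodbP good; rewrite /Fv; case: excluded_middle_informative => [ex | []].
  by case: ex_minnP => m /Fv_goodbP.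
by exists n.
Qed.

Lemma Fv_eq0 : ~ (exists n, Fv_good k h1 h2 n) -> Fv k h1 h2 = 0.
Proof.
move=> none; rewrite /Fv; case: excluded_middle_informative => // ex; exfalso.
by case: ex => n /Fv_goodbP good; apply: none; exists n.
Qed.

End MinimalOrder.

Lemma Fv_good_Jrel_Krel k l n :
  Fv_good k (Jrel l.+1) (Jrel l.+1) n -> Fv_good k (Krel l) (Krel l) n.
Proof.
case=> g [g_graph [g_free g_arrows]]; exists g; do 2!split=> //.
by move=> X; case: (g_arrows X) => /contains_Jrel_Krel; [left | right].
Qed.

Theorem mainTheorem7 (k : nat) (hk : 3 <= k) :
  Fv k (Jrel k) (Jrel k) <= (5 * Fv k (Krel k.-1) (Krel k.-1) + 1) %/ 2.
Proof.
case: k hk => [|[|[|k]]] // _ /=.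
have [[n0 good0] | none] :=
    classic (exists n, Fv_good k.+3 (Krel k.+2) (Krel k.+2) n); last first.
  by rewrite Fv_eq0 // => -[n /Fv_good_Jrel_Krel good]; apply: none; exists n.
have := Fv_good_Fv (ex_intro _ n0 good0).
have := @Fv_leq k.+3 _ _ (Krel k.+2) (Krel k.+2).
case: (Fv k.+3 (Krel k.+2) (Krel k.+2)) => [|N] minimal [g [g_graph [g_free arr]]].
  by case: (arr setT) => /contains_in_leq.
have not_good : ~ Fv_good k.+3 (Krel k.+2) (Krel k.+2) N.
  by move/minimal; rewrite ltnn.
have [Z [Z_free CZ_free]] := critical_partition g_graph g_free not_good.
have /Fv_leq := Fv_good_twin g_graph g_free arr Z_free CZ_free.
lia.
Qed.
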